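(* Let $n\ge2$ and $1\le\ell\le s$ be integers, and consider the saturation SQGT model with thresholds $(1,2,\dots,s)$, in which a test $\mathbf{x}\in\{0,1\}^n$ applied to $\mathbf{b}$ returns $\min(\mathbf{x}\cdot\mathbf{b},s)$. Let $m=\lceil\log_2 n\rceil$ and let $\mathbf{N}$ be the $(m+1)\times n$ binary matrix with $\mathbf{N}(r,j)$ equal to the $r$-th binary digit of $j$ (i.e. $\lfloor j/2^r\rfloor\bmod2$) for $0\le r<m$, $0\le j<n$, and whose last row is all ones. Then $\mathbf{N}$ solves $\mathrm{Burst}(n,\le\ell,\underline{\eta})$: any two distinct bursts in $\{0,1\}^n$ of lengths between $1$ and $\ell$ yield distinct outcome vectors. Thus $\lceil\log_2 n\rceil+1$ measurements suffice.
   Context: Items are indexed $0,\dots,n-1$. A burst with head $a$ and tail $t$ ($0\le a\le t\le n-1$) is the vector in $\{0,1\}^n$ whose $j$-th coordinate is $1$ iff $a\le j\le t$; its length is $t-a+1$. $\mathrm{Burst}(n,\le\ell,\underline{\eta})$ is the problem of identifying an unknown burst of length in $\{1,\dots,\ell\}$ from the outcome vector (entrywise outcomes of the rows of the test matrix). *)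

From mathcomp Require Import all_boot all_order.
Set Implicit Arguments. Unset Strict Implicit. Unset Printing Implicit Defensive.

(* ceil(log2 n) = smallest e with n <= 2^e (for n >= 1) *)
Definition ceil_log2 (n : nat) : nat := up_log 2 n.

Definition burst (n a t : nat) : {ffun 'I_n -> nat} :=
  [ffun j : 'I_n => ((a <= j) && (j <= t) : nat)].

Definition is_burst_le (n l a t : nat) : Prop :=
  a <= t /\ t < n /\ t - a + 1 <= l.

Definition Nmat (n : nat) (r : 'I_(ceil_log2 n).+1) (j : 'I_n) : nat :=
  if r < ceil_log2 n then (j %/ 2 ^ r) %% 2 else 1.

Definition sat_outcome (n s : nat) (x b : {ffun 'I_n -> nat}) : nat :=
  minn (\sum_(j < n) x j * b j) s.

Definition outcome (n s : nat) (b : {ffun 'I_n -> nat}) : {ffun 'I_(ceil_log2 n).+1 -> nat} :=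
  [ffun r => sat_outcome s [ffun j => Nmat r j] b].

From mathcomp Require Import all_boot all_order.
From mathcomp Require Import zify.

Set Implicit Arguments.
Unset Strict Implicit.

(* Let m = ceil_log2 n and let a burst have head a, tail t
   and length L = t + 1 - a <= l <= s.  Every row of N is 0/1, so the inner
   product of a row with the burst is at most L <= s: saturation never
   occurs and each outcome is the exact count of positions j in [a, t]
   selected by the row.
   - The all-ones last row therefore returns L itself.
   - Row r < m counts the j in [a, t] whose r-th binary digit is 1; since
     every j < n < 2^m equals the sum of its first m binary digits weighted
     by 2^r, the weighted sum of these rows is sum_{j=a}^{t} j
     = (0 + 1 + ... + (L-1)) + L * a.
   Equal outcome vectors thus give equal L and then (as L >= 1) equal a,
   hence equal t, i.e. equal bursts. *)

Lemma modn_double (j d : nat) : 0 < d -> j %% (d * 2) = j %% d + d * (j %/ d %% 2).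
Proof.
move=> d_gt0.
rewrite {1}(divn_eq j d) {1}(divn_eq (j %/ d) 2).
have digit_lt2 : j %/ d %% 2 < 2 by rewrite ltn_mod.
have rem_lt_d : j %% d < d by rewrite ltn_mod.
have -> : (j %/ d %/ 2 * 2 + j %/ d %% 2) * d + j %% d
          = j %/ d %/ 2 * (d * 2) + (j %% d + d * (j %/ d %% 2)) by lia.
rewrite modnMDl modn_small //; nia.
Qed.

Lemma binary_expansion (m j : nat) :
  \sum_(r < m) 2 ^ r * (j %/ 2 ^ r %% 2) = j %% 2 ^ m.
Proof.
elim: m => [|m IHm]; first by rewrite big_ord0 expn0 modn1.
by rewrite big_ord_recr /= IHm expnS [2 * _]mulnC modn_double ?expn_gt0 // addnC.
Qed.

Lemma interval_sum (a L : nat) :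
  \sum_(a <= j < a + L) j = \sum_(i < L) i + L * a.
Proof.
rewrite -{1}[a]add0n big_addn addKn big_split /= sum_nat_const_nat subn0.
by rewrite big_mkord.
Qed.

Section BurstSums.

Variables n a t : nat.
Hypothesis a_le_t : a <= t.
Hypothesis t_lt_n : t < n.

Lemma sum_burst (f : nat -> nat) :
  \sum_(j < n) burst n a t j * f j = \sum_(a <= j < t.+1) f j.
Proof.
rewrite (eq_bigr (fun j : 'I_n => ((a <= j) && (j <= t) : nat) * f j));
  last by move=> j _; rewrite ffunE.
rewrite -(big_mkord xpredT (fun j => ((a <= j) && (j <= t) : nat) * f j)).
rewrite (big_cat_nat _ (n := a)) //=; last by lia.
rewrite (big_cat_nat _ (m := a) (n := t.+1)) //=; last by lia.
rewrite big1_seq ?add0n; last first.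
  move=> i /andP[_]; rewrite mem_index_iota => /andP[_ i_lt_a].
  by rewrite leqNgt i_lt_a.
rewrite [X in _ + X]big1_seq ?addn0; last first.
  move=> i /andP[_]; rewrite mem_index_iota => /andP[t_lt_i _].
  by rewrite (leqNgt i t) t_lt_i andbF.
apply: eq_big_seq => i; rewrite mem_index_iota => /andP[a_le_i i_le_t].
by rewrite a_le_i -ltnS i_le_t mul1n.
Qed.

Lemma outcome_exact (s : nat) (r : 'I_(ceil_log2 n).+1) :
  t.+1 - a <= s ->
  outcome s (burst n a t) r = \sum_(j < n) Nmat r j * burst n a t j.
Proof.
move=> short.
rewrite /outcome ffunE /sat_outcome.
under eq_bigr => j _ do rewrite ffunE.
apply/minn_idPl; apply: leq_trans short.
have Nmat_bit j : Nmat r j <= 1.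
  by rewrite /Nmat; case: ifP => // _; rewrite -ltnS ltn_mod.
apply: (@leq_trans (\sum_(j < n) burst n a t j * 1)).
  by apply: leq_sum => j _; rewrite mulnC leq_mul2l Nmat_bit orbT.
by rewrite (sum_burst (fun=> 1)) sum_nat_const_nat muln1.
Qed.

Lemma outcome_last_row (s : nat) :
  t.+1 - a <= s -> outcome s (burst n a t) ord_max = t.+1 - a.
Proof.
move=> short; rewrite outcome_exact //.
under eq_bigr => j _ do rewrite /Nmat ltnn mul1n -[burst _ _ _ _]muln1.
by rewrite (sum_burst (fun=> 1)) sum_nat_const_nat muln1.
Qed.

Lemma outcome_digit_rows (s : nat) : t.+1 - a <= s ->
  \sum_(r < ceil_log2 n) 2 ^ r * outcome s (burst n a t) (widen_ord (leqnSn _) r)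
  = \sum_(a <= j < t.+1) j.
Proof.
move=> short.
under [in LHS]eq_bigr => r _ do rewrite outcome_exact // big_distrr.
rewrite exchange_big /= -(sum_burst id).
apply: eq_bigr => j _.
have j_small : j < 2 ^ ceil_log2 n by apply: leq_trans (ltn_ord j) (up_logP _ _).
rewrite -[in RHS](modn_small j_small) -binary_expansion big_distrr /=.
by apply: eq_bigr => r _; rewrite /Nmat /= ltn_ord; lia.
Qed.

End BurstSums.

Theorem mainTheorem9 (n l s : nat) :
  2 <= n -> 1 <= l -> l <= s ->
  forall a1 t1 a2 t2 : nat,
    is_burst_le n l a1 t1 -> is_burst_le n l a2 t2 ->
    burst n a1 t1 <> burst n a2 t2 ->
    outcome s (burst n a1 t1) <> outcome s (burst n a2 t2).
Proof.
move=> _ _ l_le_s a1 t1 a2 t2 [a1_le_t1 [t1_lt_n len1]] [a2_le_t2 [t2_lt_n len2]].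
move=> distinct same_outcome; apply: distinct.
have short1 : t1.+1 - a1 <= s by lia.
have short2 : t2.+1 - a2 <= s by lia.
have same_length : t1.+1 - a1 = t2.+1 - a2.
  by rewrite -(outcome_last_row a1_le_t1 t1_lt_n short1) same_outcome
             (outcome_last_row a2_le_t2 t2_lt_n short2).
have same_sum : \sum_(a1 <= j < t1.+1) j = \sum_(a2 <= j < t2.+1) j.
  by rewrite -(outcome_digit_rows a1_le_t1 t1_lt_n short1) same_outcome
             (outcome_digit_rows a2_le_t2 t2_lt_n short2).
have t1E : t1.+1 = a1 + (t1.+1 - a1) by lia.
have t2E : t2.+1 = a2 + (t1.+1 - a1) by lia.
rewrite t1E t2E !interval_sum in same_sum.
have same_head : a1 = a2.
  apply/eqP; rewrite -(@eqn_pmul2l (t1.+1 - a1)) ?subn_gt0 //.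
  by rewrite -(eqn_add2l (\sum_(i < t1.+1 - a1) i)) same_sum.
have same_tail : t1 = t2 by lia.
by rewrite same_head same_tail.
Qed.
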